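(* Let $p$ be an odd prime, $m\ge 3$ odd, $k\ge1$ with $\gcd(m,k)=1$, $\pi$ a primitive element of $\mathbb{F}_{p^m}$, $\zeta_p=e^{2\pi i/p}$, and $\lambda$ a fixed nonsquare in $\mathbb{F}_p$. For $a,b,c\in\mathbb{F}_{p^m}$, with $\mathbf{c}_{(a,b,c)}$ as defined in the context, the Hamming weight satisfies $$W(\mathbf{c}_{(a,b,c)})=p^m-p^{m-1}-\frac{1}{2p}\sum_{y\in\mathbb{F}_p^*}\sum_{x\in\mathbb{F}_{p^m}}\Big(\zeta_p^{y\,\mathrm{Tr}((a+b)x^2+cx^{p^k+1})}+\zeta_p^{y\,\mathrm{Tr}((a-b)\lambda x^2+\varepsilon c\lambda x^{p^k+1})}\Big),$$ where $\varepsilon=1$ if $k$ is even and $\varepsilon=-1$ if $k$ is odd.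
   Context: $\mathrm{Tr}$ is the trace map from $\mathbb{F}_{p^m}$ to $\mathbb{F}_p$. $\mathbf{c}_{(a,b,c)}=\big(\mathrm{Tr}(a\pi^{t}+b(-\pi)^{t}+c\,\pi^{(p^{k}+1)t/2})\big)_{t=0}^{p^{m}-2}$, and $W$ denotes Hamming weight (number of nonzero coordinates). *)

From HB Require Import structures.
From mathcomp Require Import all_boot all_order all_algebra all_field.
Set Implicit Arguments. Unset Strict Implicit. Unset Printing Implicit Defensive.
Import Order.TTheory GRing.Theory Num.Theory.
Local Open Scope ring_scope.

(* Absolute trace Tr : F_{p^m} -> F_p, valued in the prime subfield of F. *)
Definition Tr (F : finFieldType) (p m : nat) (x : F) : F :=
  \sum_(i < m) x ^+ (p ^ i).

(* The integer representative in {0,...,p-1} of an element of the prime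
   subfield F_p of F (0 if the element is not in the prime subfield). *)
Definition fp_nat (F : finFieldType) (p : nat) (t : F) : nat :=
  if [pick n : 'I_p | (val n)%:R == t] is Some n then val n else 0%N.

(* zeta ^ t for t in the prime field F_p (viewed inside F). *)
Definition zpow (F : finFieldType) (p : nat) (z : algC) (t : F) : algC :=
  z ^+ fp_nat p t.

(* The codeword c_(a,b,c), coordinate t, 0 <= t <= p^m - 2. *)
Definition cw (F : finFieldType) (p m k : nat) (pi a b c : F) (t : nat) : F :=
  Tr p m (a * pi ^+ t + b * (- pi) ^+ t + c * pi ^+ (((p ^ k).+1 %/ 2) * t)).

Definition Wt (F : finFieldType) (p m k : nat) (pi a b c : F) : nat :=
  #|[set t : 'I_(p ^ m).-1 | cw p m k pi a b c (val t) != 0]|.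

From HB Require Import structures.
From mathcomp Require Import all_boot all_order all_algebra all_field.
From mathcomp Require Import ring zify.
Import Order.TTheory GRing.Theory Num.Theory.
Set Implicit Arguments. Unset Strict Implicit. Unset Printing Implicit Defensive.
Local Open Scope ring_scope.

(* Write n = p^m - 1 (even) and pi = lam u^2, which is possible because lam
   stays a nonsquare in F_(p^m) for m odd.  Since lam^((p^k+1)/2) = (-1)^k lam,
   the coordinates of the n-periodic codeword satisfy
     c_(2s) = T1(pi^s)   and   c_(2s+1) = T2(u pi^s),
   where T1(x) = Tr((a+b)x^2 + c x^(p^k+1)) and
   T2(x) = Tr((a-b) lam x^2 + eps c lam x^(p^k+1)).  As pi^s runs over F^*,
   counting zero coordinates twice gives 2 W + N1 + N2 = 2 p^m, where Ni is the
   number of zeros of Ti on F.  Finally, orthogonality of the additive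
   characters of F_p turns the character sum of the theorem into
   (p N1 - p^m) + (p N2 - p^m), and the formula follows by solving for W. *)

Definition nzeros (F : finFieldType) (T : F -> F) : nat :=
  (\sum_(x : F) (T x == 0%R : nat))%N.

Lemma Tr0 (F : finFieldType) (p m : nat) : (0 < p)%N -> Tr p m (0 : F) = 0.
Proof. by move=> p0; rewrite /Tr big1 // => i _; rewrite expr0n expn_eq0 gtn_eqF. Qed.

Section PrimeSubfield.
Variables (F : finFieldType) (p : nat).
Hypothesis hchar : p \in [pchar F].

Let hp : prime p := pcharf_prime hchar.

Lemma natF_inj i j : (i < p)%N -> (j < p)%N -> (i%:R == j%:R :> F) = (i == j).
Proof.
wlog le_ij : i j / (i <= j)%N.
  move=> H hi hj; case: (leqP i j) => [/H|/ltnW/H]; first exact.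
  by rewrite eq_sym [i == j]eq_sym; apply.
move=> hi hj; rewrite eq_sym -subr_eq0 -natrB // -(dvdn_pcharf hchar).
apply/idP/eqP => [p_dvd|->]; last by rewrite subnn dvdn0.
case: (posnP (j - i)) => [|pos]; first lia.
by have := dvdn_leq pos p_dvd; lia.
Qed.

Lemma fp_nat_nat n : (n < p)%N -> fp_nat p (n%:R : F) = n.
Proof.
move=> hn; rewrite /fp_nat; case: pickP => [x /eqP hx | none].
  by apply/eqP; rewrite -natF_inj ?ltn_ord //; apply/eqP.
by have := none (Ordinal hn); rewrite eqxx.
Qed.

Lemma natF_frobenius n : (n%:R : F) ^+ p = n%:R.
Proof. by rewrite -(pFrobenius_autE hchar) pFrobenius_aut_nat. Qed.

(* The fixed points of Frobenius are the prime field: X^p - X has the p roots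
   0, ..., p-1 and no others. *)
Lemma frobenius_fixed_nat (z : F) : z ^+ p = z -> exists2 n, (n < p)%N & z = n%:R.
Proof.
move=> hz; set prime_field := [seq (i%:R : F) | i <- iota 0 p].
have [|z_new] := boolP (z \in prime_field).
  by case/mapP => i; rewrite mem_iota add0n => /andP[_ hi] ->; exists i.
have p1 := prime_gt1 hp.
set P : {poly F} := 'X^p - 'X.
have szP : size P = p.+1 by rewrite size_polyDl ?size_polyN size_polyXn ?size_polyX.
have P_neq0 : P != 0 by rewrite -size_poly_gt0 szP.
have roots : all (root P) (z :: prime_field).
  apply/allP => x /predU1P [->|/mapP [i _ ->]];
  by rewrite /root !hornerE ?hz ?natF_frobenius subrr.
have uniq_roots : uniq (z :: prime_field).
  rewrite /= z_new map_inj_in_uniq ?iota_uniq // => i j.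
  by rewrite !mem_iota !add0n => /andP[_ hi] /andP[_ hj] /eqP; rewrite natF_inj // => /eqP.
by have := max_poly_roots P_neq0 roots uniq_roots; rewrite szP /= size_map size_iota ltnn.
Qed.

Lemma sum_zpow_prime (zeta : algC) (z : F) : p.-primitive_root zeta -> z ^+ p = z ->
  \sum_(1 <= y < p) zpow p zeta (y%:R * z) = if z == 0 then (p.-1)%:R else -1.
Proof.
move=> hzeta /frobenius_fixed_nat [n hn ->]; have p0 := prime_gt0 hp.
have zpowE y : zpow p zeta (y%:R * n%:R : F) = (zeta ^+ n) ^+ y.
  rewrite /zpow -natrM -(GRing.natr_mod_pchar hchar) fp_nat_nat ?ltn_mod //.
  by rewrite (prim_expr_mod hzeta) -exprM mulnC.
under eq_bigr do rewrite zpowE.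
have [->|n0] := posnP n.
  rewrite eqxx (eq_bigr (fun _ => 1)) => [|y _]; last by rewrite expr0 expr1n.
  by rewrite sumr_const_nat -{2}(prednK p0) subn1.
rewrite -[0 : F]/(0%:R) natF_inj //= gtn_eqF //.
have w_neq1 : zeta ^+ n != 1.
  by rewrite -(expr0 zeta) (eq_prim_root_expr hzeta) mod0n modn_small //; lia.
have w_order : (zeta ^+ n) ^+ p = 1 by rewrite exprAC (prim_expr_order hzeta) expr1n.
have geo0 : \sum_(0 <= y < p) (zeta ^+ n) ^+ y = 0.
  apply/eqP; have := subrX1 (zeta ^+ n) p; rewrite w_order subrr big_mkord.
  by move/esym/eqP; rewrite mulf_eq0 subr_eq0 (negbTE w_neq1).
by move/eqP: geo0; rewrite (big_ltn (m := 0)) // expr0 addrC addr_eq0 => /eqP.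
Qed.

Section Trace.
Variable m : nat.
Hypothesis hcard : #|F| = (p ^ m)%N.

Lemma Tr_frobenius (x : F) : Tr p m x ^+ p = Tr p m x.
Proof.
rewrite /Tr -(pFrobenius_autE hchar) rmorph_sum.
under eq_bigr do rewrite /= pFrobenius_autE -exprM -expnSr.
have split_last : \sum_(i < m.+1) x ^+ (p ^ i) = \sum_(i < m) x ^+ (p ^ i) + x.
  by rewrite big_ord_recr /= -hcard expf_card.
by move: split_last; rewrite big_ord_recl expn0 expr1 addrC => /addIr.
Qed.

End Trace.

Lemma character_sum_zeros (zeta : algC) (T : F -> F) :
  p.-primitive_root zeta -> (forall x, T x ^+ p = T x) ->
  \sum_(1 <= y < p) \sum_(x : F) zpow p zeta (y%:R * T x) =
  (p * nzeros T)%N%:R - #|F|%:R.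
Proof.
move=> hzeta hT; rewrite exchange_big /=.
under eq_bigr do rewrite sum_zpow_prime //.
rewrite (eq_bigr (fun x => (p * (T x == 0))%:R - 1)) => [|x _]; last first.
  by case: (T x == 0); rewrite ?muln1 ?muln0 ?sub0r // -subn1 natrB ?prime_gt0.
by rewrite sumrB /nzeros big_distrr natr_sum -sum1_card natr_sum.
Qed.

End PrimeSubfield.

Lemma half_pred_expn (p k : nat) : odd p ->
  ((p ^ k).-1./2 = (p.-1)./2 * \sum_(i < k) p ^ i)%N.
Proof.
move=> hpodd; rewrite predn_exp; set h := (p.-1)./2.
have -> : p.-1 = (h * 2)%N by rewrite /h; move: hpodd; clear; case: p => //; lia.
by rewrite mulnAC muln2 doubleK.
Qed.

Lemma odd_geo (p k : nat) : odd p -> odd (\sum_(i < k) p ^ i)%N = odd k.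
Proof.
move=> hpodd; elim: k => [|k IH]; first by rewrite big_ord0.
by rewrite big_ord_recr /= oddD IH oddX hpodd orbT addbT.
Qed.

Section PrimitiveElement.
Variables (F : finFieldType) (pi : F).
Hypothesis hpi : #|F|.-1.-primitive_root pi.

Lemma unit_pow_card (x : F) : x != 0 -> x ^+ #|F|.-1 = 1.
Proof.
move=> x0; have card_gt0 : (0 < #|F|)%N by apply/card_gt0P; exists 0.
apply: (mulfI x0); rewrite mulr1 -exprS prednK //; exact: expf_card.
Qed.

Lemma primitive_neq0 : pi != 0.
Proof.
apply/eqP => pi0; have := prim_expr_order hpi.
by rewrite pi0 expr0n gtn_eqF ?(prim_order_gt0 hpi) //= => /eqP; rewrite eq_sym oner_eq0.
Qed.

Lemma sum_over_powers (g : F -> nat) :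
  (\sum_(x : F) g x = g 0%R + \sum_(0 <= s < #|F|.-1) g (pi ^+ s))%N.
Proof.
rewrite (bigD1 0%R) //= big_mkord; congr (_ + _)%N.
have inj : {in [set: 'I_#|F|.-1] &, injective (fun s : 'I_#|F|.-1 => pi ^+ s)}.
  move=> i j _ _ /eqP; rewrite (eq_prim_root_expr hpi) !modn_small //.
  by move/eqP/val_inj.
rewrite [RHS](eq_bigl (fun s => s \in [set: 'I_#|F|.-1])); last by move=> s; rewrite inE.
rewrite -(big_imset _ inj); apply: eq_bigl => x.
apply/idP/imsetP => [x0 | [s _ ->]]; last exact: expf_neq0 primitive_neq0.
by have [i ->] := prim_rootP hpi (unit_pow_card x0); exists i.
Qed.

Section OddOrder.
Hypothesis hFodd : odd #|F|.

Let card_gt2 : (2 < #|F|)%N.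
Proof.
have : (1 < #|F|)%N by rewrite (cardD1 0) (cardD1 1) !inE oner_neq0.
by move: hFodd; lia.
Qed.

Let n_even : (#|F|.-1./2 * 2 = #|F|.-1)%N.
Proof. by move: hFodd card_gt2; lia. Qed.

Lemma primitive_half_pow : pi ^+ #|F|.-1./2 = -1.
Proof.
have /eqP : (pi ^+ #|F|.-1./2) ^+ 2 = 1 by rewrite -exprM n_even (prim_expr_order hpi).
rewrite sqrf_eq1 => /orP [/eqP|/eqP //].
rewrite -(expr0 pi) => /eqP; rewrite (eq_prim_root_expr hpi) mod0n modn_small;
  by move: card_gt2; lia.
Qed.

Lemma nonsquare_odd_log (x : F) : x != 0 -> (forall w : F, w ^+ 2 != x) ->
  exists2 j, odd j & x = pi ^+ j.
Proof.
move=> x0 nonsq; have [j hj] := prim_rootP hpi (unit_pow_card x0).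
exists j => //; apply: contraT => j_even; have := nonsq (pi ^+ j./2).
by rewrite -exprM hj (_ : j./2 * 2 = j)%N ?eqxx //; move: j_even; lia.
Qed.

Lemma nonsquare_half_pow (x : F) : x != 0 -> (forall w : F, w ^+ 2 != x) ->
  x ^+ #|F|.-1./2 = -1.
Proof.
move=> x0 /(nonsquare_odd_log x0) [j j_odd ->].
by rewrite exprAC primitive_half_pow -signr_odd j_odd expr1.
Qed.

Lemma primitive_nonsquare_ratio (x : F) : x != 0 -> (forall w : F, w ^+ 2 != x) ->
  exists u : F, pi = x * u ^+ 2.
Proof.
move=> x0 /(nonsquare_odd_log x0) [j j_odd ->].
have [r r_def] : exists r, (j + r * 2 = #|F|.-1 * j + 1)%N.
  have j_half : (j./2 * 2 + 1 = j)%N by move: j_odd; lia.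
  exists (#|F|.-1./2 * j - j./2)%N; rewrite mulnBl -mulnA (mulnC j) mulnA n_even.
  have : (j <= #|F|.-1 * j)%N by rewrite leq_pmull //; have := card_gt2; lia.
  lia.
exists (pi ^+ r); rewrite -exprM -exprD r_def exprD exprM.
by rewrite (prim_expr_order hpi) expr1n mul1r.
Qed.

End OddOrder.
End PrimitiveElement.

Section Nonresidue.
Variables (F : finFieldType) (p m lam : nat) (pi : F).
Hypotheses (hpodd : odd p) (hmodd : odd m).
Hypotheses (hchar : p \in [pchar F]) (hcard : #|F| = (p ^ m)%N).
Hypothesis hpi : #|F|.-1.-primitive_root pi.
Hypotheses (hlam0 : (0 < lam < p)%N) (hlam : forall n : nat, ((n * n) %% p)%N != lam).

Let p_gt2 : (2 < p)%N := odd_prime_gt2 hpodd (pcharf_prime hchar).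

Let F_odd : odd #|F|.
Proof. by rewrite hcard oddX hpodd orbT. Qed.

Let two_neq0 : (2%:R : F) != 0.
Proof. by rewrite -(dvdn_pcharf hchar) gtnNdvd. Qed.

Lemma lam_neq0 : (lam%:R : F) != 0.
Proof. by case/andP: hlam0 => ? ?; rewrite -(dvdn_pcharf hchar) gtnNdvd. Qed.

(* lam stays a nonsquare in F: a square root w would satisfy w^p = +-w; the
   sign + puts w in the prime field, and the sign - is ruled out by m odd. *)
Lemma lam_nonsquare (w : F) : w ^+ 2 != lam%:R.
Proof.
apply/eqP => w_sqrt.
have /eqP : (w ^+ p) ^+ 2 = w ^+ 2 by rewrite exprAC w_sqrt natF_frobenius.
rewrite -subr_eq0 subr_sqr mulf_eq0 !subr_eq0 addr_eq0 => /orP [] /eqP w_frob.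
  have [n hn w_nat] := frobenius_fixed_nat hchar w_frob.
  move: w_sqrt; rewrite w_nat -natrX -(GRing.natr_mod_pchar hchar) => /eqP.
  rewrite (natF_inj hchar) ?ltn_mod ?prime_gt0 ?(pcharf_prime hchar) //;
    last by case/andP: hlam0.
  by rewrite -mulnn; apply/negP/hlam.
have w_iter i : w ^+ (p ^ i) = (-1) ^+ i * w.
  elim: i => [|i IH]; first by rewrite expr0 mul1r expr1.
  rewrite expnSr exprM IH exprMn w_frob -exprM -(signr_odd _ (i * p)) oddM hpodd andbT.
  by rewrite signr_odd mulrN exprS mulN1r mulNr.
have := w_iter m; rewrite -hcard expf_card -signr_odd hmodd mulN1r.
move/eqP; rewrite -addr_eq0 -mulr2n -mulr_natr mulf_eq0 (negbTE two_neq0) orbF.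
by move/eqP=> w0; move: w_sqrt; rewrite w0 expr0n => /eqP; rewrite eq_sym (negbTE lam_neq0).
Qed.

Lemma lam_euler : (lam%:R : F) ^+ (p.-1)./2 = -1.
Proof.
set z := (lam%:R : F) ^+ (p.-1)./2.
have /eqP : z ^+ 2 = 1.
  rewrite -exprM (_ : _ * 2 = p.-1)%N; last by move: hpodd; lia.
  apply: (mulfI lam_neq0); rewrite mulr1 -exprS (prednK (odd_gt0 hpodd)).
  exact: natF_frobenius.
rewrite sqrf_eq1 => /orP [/eqP z1|/eqP //].
have := nonsquare_half_pow hpi F_odd lam_neq0 lam_nonsquare.
rewrite hcard half_pred_expn // exprM -/z z1 expr1n => /eqP.
by rewrite -addr_eq0 -[1 + 1]/(2%:R) (negbTE two_neq0).
Qed.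

(* The twist relating the two quadratic forms: lam^((p^k+1)/2) = (-1)^k lam. *)
Lemma lam_pow_half (k : nat) :
  (lam%:R : F) ^+ ((p ^ k).+1 %/ 2) = (-1) ^+ k * lam%:R.
Proof.
have pk_odd : odd (p ^ k) by rewrite oddX hpodd orbT.
have -> : ((p ^ k).+1 %/ 2 = (p.-1)./2 * \sum_(i < k) p ^ i + 1)%N.
  by rewrite -half_pred_expn //; move: pk_odd; lia.
rewrite exprD exprM lam_euler expr1 -(signr_odd _ (\sum_(i < k) p ^ i)).
by rewrite odd_geo // signr_odd.
Qed.

Lemma primitive_lam_ratio : exists u : F, pi = lam%:R * u ^+ 2.
Proof. exact: (primitive_nonsquare_ratio hpi F_odd lam_neq0 lam_nonsquare). Qed.

End Nonresidue.

Lemma periodic_pair_sum (f : nat -> nat) (n : nat) : (forall t, f (t + n)%N = f t) ->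
  (2 * \sum_(0 <= t < n) f t =
   \sum_(0 <= s < n) f (2 * s)%N + \sum_(0 <= s < n) f (2 * s).+1)%N.
Proof.
move=> f_per; rewrite -big_split /=.
have pairs r : (\sum_(0 <= s < r) (f (2 * s)%N + f (2 * s).+1) = \sum_(0 <= t < 2 * r) f t)%N.
  elim: r => [|r IH]; first by rewrite !big_geq.
  by rewrite big_nat_recr //= IH mulnS !add2n !big_nat_recr //= addnA.
rewrite pairs !mul2n -!addnn [RHS](@big_cat_nat _ _ _ n) ?leq_addr //=; congr (_ + _)%N.
rewrite -{2}(add0n n) big_addn addnK.
by apply: eq_bigr => t _; rewrite f_per.
Qed.

Lemma nzeros_scale (F : finFieldType) (u : F) (T : F -> F) : u != 0 ->
  nzeros (fun x => T (u * x)) = nzeros T.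
Proof. by move=> u0; rewrite /nzeros [RHS](reindex_inj (mulfI u0)). Qed.

Section Codeword.
Variables (F : finFieldType) (p m k : nat) (pi a b c lamF eps u : F).
Hypotheses (hpodd : odd p) (hcard : #|F| = (p ^ m)%N).
Hypothesis hpi : (p ^ m).-1.-primitive_root pi.
Hypotheses (hu : pi = lamF * u ^+ 2) (hlam : lamF ^+ ((p ^ k).+1 %/ 2) = eps * lamF).

(* The two quadratic forms whose zeros are counted by the even and the odd
   coordinates of the codeword. *)
Definition quadT1 (x : F) : F := Tr p m ((a + b) * x ^+ 2 + c * x ^+ (p ^ k).+1).
Definition quadT2 (x : F) : F :=
  Tr p m ((a - b) * lamF * x ^+ 2 + eps * c * lamF * x ^+ (p ^ k).+1).

Let n := (p ^ m).-1.
Let e := ((p ^ k).+1 %/ 2)%N.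

Let e_double : (e * 2 = (p ^ k).+1)%N.
Proof. have : odd (p ^ k) by rewrite oddX hpodd orbT. by rewrite /e; lia. Qed.

Let cwE t :
  cw p m k pi a b c t = Tr p m (a * pi ^+ t + b * (- pi) ^+ t + c * pi ^+ (e * t)).
Proof. by []. Qed.

Lemma cw_periodic t : cw p m k pi a b c (t + n) = cw p m k pi a b c t.
Proof.
have pi_n : pi ^+ n = 1 := prim_expr_order hpi.
have n_even : ~~ odd n.
  have : odd (p ^ m) by rewrite oddX hpodd orbT.
  by rewrite /n; case: (p ^ m)%N => //= r; rewrite negbK.
have mpi_n : (- pi) ^+ n = 1.
  by rewrite -mulN1r exprMn pi_n mulr1 -signr_odd (negbTE n_even).
by rewrite !cwE mulnDr !exprD pi_n mpi_n (mulnC e n) (exprM pi n e) pi_n expr1n !mulr1.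
Qed.

Let square s : pi ^+ (2 * s) = (pi ^+ s) ^+ 2.
Proof. by rewrite mulnC exprM. Qed.

Let sign_even s : (- pi) ^+ (2 * s) = pi ^+ (2 * s).
Proof. by rewrite !exprM sqrrN. Qed.

Lemma cw_even s : cw p m k pi a b c (2 * s) = quadT1 (pi ^+ s).
Proof.
have twist : pi ^+ (e * (2 * s)) = (pi ^+ s) ^+ (p ^ k).+1.
  by rewrite mulnA e_double mulnC exprM.
by rewrite cwE /quadT1 sign_even square twist mulrDl.
Qed.

Lemma cw_odd s : cw p m k pi a b c (2 * s).+1 = quadT2 (u * pi ^+ s).
Proof.
have pi_e : pi ^+ e = eps * lamF * u ^+ (p ^ k).+1.
  by rewrite {1}hu exprMn hlam -exprM mulnC e_double.
have twist : pi ^+ (e * (2 * s).+1) = eps * lamF * (u * pi ^+ s) ^+ (p ^ k).+1.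
  rewrite (_ : e * _ = e + s * (p ^ k).+1)%N; last by rewrite -e_double; lia.
  by rewrite exprD exprM pi_e exprMn mulrA.
rewrite cwE /quadT2 twist [pi ^+ _]exprS [(- pi) ^+ _]exprS sign_even square.
by move: (pi ^+ s) => x; rewrite {1 2}hu; congr (Tr p m _); ring.
Qed.

(* Each nonzero x is pi^s for exactly one s < p^m - 1, so the zeros of T1 and
   T2 are the zero coordinates of c at even and odd positions, plus x = 0;
   by periodicity each zero coordinate is seen exactly twice. *)
Lemma weight_zero_count :
  (2 * Wt p m k pi a b c + nzeros quadT1 + nzeros quadT2 = 2 * p ^ m)%N.
Proof.
have hpi' : #|F|.-1.-primitive_root pi by rewrite hcard.
have u0 : u != 0.
  by apply: contraNneq (primitive_neq0 hpi') => u0; rewrite hu u0 expr0n mulr0.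
have p0 : (0 < p)%N := odd_gt0 hpodd.
set f := fun t => (cw p m k pi a b c t == 0%R : nat).
have weight_plus_zeros : (Wt p m k pi a b c + \sum_(0 <= t < n) f t = n)%N.
  rewrite /Wt -sum1_card big_mkcond /= -/n big_mkord -big_split /=.
  rewrite (eq_bigr (fun _ => 1%N)); first by rewrite sum1_card card_ord.
  by move=> t _; rewrite inE /f; case: (_ == 0).
have zeros_twice :=
  @periodic_pair_sum f n (fun t => congr1 (fun y => (y == 0%R : nat)) (cw_periodic t)).
have zeros1 : nzeros quadT1 = (\sum_(0 <= s < n) f (2 * s)%N).+1.
  rewrite /nzeros (sum_over_powers hpi') hcard /quadT1 !expr0n /= !mulr0 addr0.
  rewrite Tr0 // eqxx add1n; congr _.+1.
  by apply: eq_bigr => s _; rewrite /f cw_even.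
have zeros2 : nzeros quadT2 = (\sum_(0 <= s < n) f (2 * s).+1).+1.
  rewrite -(nzeros_scale _ u0) /nzeros (sum_over_powers hpi') hcard mulr0 /quadT2.
  rewrite !expr0n /= !mulr0 addr0 Tr0 // eqxx add1n; congr _.+1.
  by apply: eq_bigr => s _; rewrite /f cw_odd.
have pm : (p ^ m = n.+1)%N by rewrite /n prednK // expn_gt0 p0.
by rewrite zeros1 zeros2 pm; lia.
Qed.

End Codeword.

Lemma weight_from_zero_counts (R : numFieldType) (W N1 N2 p q : nat) : (0 < p)%N ->
  (2 * W + N1 + N2 = 2 * (p * q))%N ->
  (W%:R : R) = (p * q)%N%:R - q%:R - ((2 * p)%:R)^-1 *
     ((p * N1)%N%:R - (p * q)%N%:R + ((p * N2)%N%:R - (p * q)%N%:R)).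
Proof.
move=> p0 counts; have p_neq0 : (p%:R : R) != 0 by rewrite pnatr_eq0 -lt0n.
have -> : ((2 * p)%:R : R) = 2 * p%:R by rewrite -natrM.
have -> : (W%:R : R) = ((2 * (p * q))%N%:R - N1%:R - N2%:R) / 2.
  by rewrite -counts !natrD; field.
by rewrite !natrM; field; rewrite p_neq0.
Qed.

Theorem mainTheorem2 (p m k : nat) (F : finFieldType)
  (hp : prime p) (hpodd : odd p)
  (hm3 : (3 <= m)%N) (hmodd : odd m) (hk : (1 <= k)%N) (hmk : coprime m k)
  (hchar : p \in [pchar F]) (hcard : #|F| = (p ^ m)%N)
  (pi : F) (hpi : (p ^ m).-1.-primitive_root pi)
  (zeta : algC) (hzeta : p.-primitive_root zeta)
  (lam : nat) (hlam0 : (0 < lam < p)%N)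
  (hlam : forall n : nat, ((n * n) %% p)%N != lam)
  (a b c : F) :
  let eps : F := (-1) ^+ k in
  let lamF : F := lam%:R in
  (Wt p m k pi a b c)%:R =
    (p ^ m)%:R - (p ^ m.-1)%:R
    - ((2 * p)%:R)^-1 *
      \sum_(1 <= y < p) \sum_(x : F)
        ( zpow p zeta (y%:R * Tr p m ((a + b) * x ^+ 2 + c * x ^+ (p ^ k).+1))
        + zpow p zeta (y%:R * Tr p m ((a - b) * lamF * x ^+ 2
                                     + eps * c * lamF * x ^+ (p ^ k).+1)))
    :> algC.
Proof.
move=> eps lamF.
have hpi' : #|F|.-1.-primitive_root pi by rewrite hcard.
have [u hu] := primitive_lam_ratio hpodd hmodd hchar hcard hpi' hlam0 hlam.
have twist := lam_pow_half hpodd hmodd hchar hcard hpi' hlam0 hlam k.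
have counts := weight_zero_count a b c hpodd hcard hpi hu twist.
have Tr_prime := Tr_frobenius hchar hcard.
under eq_bigr do rewrite big_split.
rewrite big_split /= !(character_sum_zeros hchar hzeta) // hcard.
have p_pow : (p ^ m = p * p ^ m.-1)%N by rewrite -expnS prednK // odd_gt0.
rewrite p_pow; rewrite p_pow in counts.
exact: weight_from_zero_counts (prime_gt0 hp) counts.
Qed.
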